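(* Let $K,G,m_0,A_g,B_g,\bar f_c,\bar f_t>0$, $e\in[0.5,1]$, $m_g'(p)=A_g e^{\frac{p-\bar f_t/3}{B_g\bar f_c}}$, and $\hat f(p,\varrho,\varrho_e)=\frac32\left(\frac{\varrho}{\bar f_c}\right)^2+m_0\left(\frac{\varrho_e}{\sqrt6\bar f_c}+\frac{p}{\bar f_c}\right)-1$. Let $\boldsymbol\sigma^{tr}\in\mathbb R^{3\times3}_{sym}$ with $p^{tr}=p(\boldsymbol\sigma^{tr})$, $\varrho^{tr}=\varrho(\boldsymbol\sigma^{tr})$, $r_e^{tr}=r_e(\cos\theta(\boldsymbol\sigma^{tr}))$, $\varrho_e^{tr}=\varrho_e(\boldsymbol\sigma^{tr})$. For $\gamma\ge0$ let $\hat p_{tr}(\gamma)$ be the unique real $p_\gamma$ with $p_\gamma+\gamma K m_g'(p_\gamma)/\bar f_c=p^{tr}$, let $\hat\varrho_{tr}(\gamma)$ be the unique real $\varrho_\gamma$ with $\varrho_\gamma=\big[\varrho^{tr}-\gamma2G\big(\frac{3\varrho_\gamma}{\bar f_c^2}+\frac{m_0}{\sqrt6\bar f_c}\big)\big]^+$, and $$q_{tr}(\gamma)=\frac32\Big(\frac{\hat\varrho_{tr}(\gamma)}{\bar f_c}\Big)^2+m_0\Big(\frac{\hat\varrho_{tr}(\gamma)r_e^{tr}}{\sqrt6\bar f_c}+\frac{\hat p_{tr}(\gamma)}{\bar f_c}\Big)-1.$$ Assume $\hat f(p^{tr},\varrho^{tr},\varrho_e^{tr})>0$. Then there exists a unique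 $\triangle\lambda>0$ with $q_{tr}(\triangle\lambda)=0$. Furthermore, each of the following problems has a unique solution: (R) find $(p,\varrho,\triangle\lambda)$ with $p=p^{tr}-\triangle\lambda K\frac{m_g'(p)}{\bar f_c}$, $\varrho=\big[\varrho^{tr}-\triangle\lambda2G\big(\frac{3\varrho}{\bar f_c^2}+\frac{m_0}{\sqrt6\bar f_c}\big)\big]^+$, $\hat f(p,\varrho,\varrho r_e^{tr})=0$; (P) find $(\boldsymbol\sigma,\triangle\lambda)$ with $\boldsymbol\sigma=\boldsymbol\sigma^{tr}-\triangle\lambda\big[K\frac{m_g'(p(\boldsymbol\sigma))}{\bar f_c}\mathbf I+2G\big(\frac{3\varrho(\boldsymbol\sigma)}{\bar f_c^2}+\frac{m_0}{\sqrt6\bar f_c}\big)\hat{\mathbf n}\big]$ for some $\hat{\mathbf n}\in\partial\varrho(\boldsymbol\sigma)$, $\triangle\lambda\ge0$, $\hat f(p(\boldsymbol\sigma),\varrho(\boldsymbol\sigma),\varrho_e(\boldsymbol\sigma))\le0$, $\triangle\lambda\hat f(p(\boldsymbol\sigma),\varrho(\boldsymbol\sigma),\varrho_e(\boldsymbol\sigma))=0$. In addition, if $q_{tr}\big(\sqrt6\bar f_c\varrho^{tr}/(2Gm_0)\big)<0$ then $\triangle\lambda\in\big(0,\sqrt6\bar f_c\varrho^{tr}/(2Gm_0)\big)$ and $\varrho>0$; conversely, if $q_{tr}\big(\sqrt6\bar f_c\varrho^{tr}/(2Gm_0)\big)\ge0$ then $\triangle\lambda\ge\sqrt6\bar f_c\varrho^{tr}/(2Gm_0)$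 and $\varrho=0$ (with $\varrho$ the corresponding component of the solution of (R)).
   Context: $\mathbb R^{3\times3}_{sym}$: real symmetric $3\times3$ matrices with Frobenius product '':'' and norm; $\mathbf I$ identity; $p(\boldsymbol\sigma)=\frac13\mathbf I:\boldsymbol\sigma$, $\mathbf s(\boldsymbol\sigma)=\boldsymbol\sigma-p(\boldsymbol\sigma)\mathbf I$, $\varrho(\boldsymbol\sigma)=\|\mathbf s(\boldsymbol\sigma)\|$; for $\varrho(\boldsymbol\sigma)>0$, $\theta(\boldsymbol\sigma)=\frac13\arccos\big(\frac{3\sqrt3}{2}J_3/J_2^{3/2}\big)$ with $J_2=\frac12\mathbf s:\mathbf s$, $J_3=\frac13\mathbf s^3:\mathbf I$. $r_e(\cos\theta)=\frac{4(1-e^2)\cos^2\theta+(2e-1)^2}{2(1-e^2)\cos\theta+(2e-1)\sqrt{4(1-e^2)\cos^2\theta+5e^2-4e}}$; $\varrho_e(\boldsymbol\sigma)=\varrho(\boldsymbol\sigma)r_e(\cos\theta(\boldsymbol\sigma))$ if $\varrho(\boldsymbol\sigma)>0$ and $0$ otherwise. When $\varrho^{tr}=0$, products of the form $(\cdot)\,r_e^{tr}$ with a vanishing factor are interpreted as $0$. $(x)^+=\max\{0,x\}$. $\partial\varrho(\boldsymbol\sigma)=\{\mathbf s(\boldsymbol\sigma)/\varrho(\boldsymbol\sigma)\}$ if $\varrho(\boldsymbol\sigma)>0$, and $\{\hat{\mathbf n}\in\mathbb R^{3\times3}_{sym}:\mathbf I:\hat{\mathbf n}=0,\|\hat{\mathbf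 n}\|\le1\}$ if $\varrho(\boldsymbol\sigma)=0$. *)

From HB Require Import structures.
From mathcomp Require Import all_boot all_order all_algebra.
From mathcomp Require Import all_classical all_reals all_analysis.
Set Implicit Arguments. Unset Strict Implicit. Unset Printing Implicit Defensive.
Import Order.TTheory GRing.Theory Num.Theory.
Local Open Scope ring_scope.
Local Open Scope classical_set_scope.

Section Defs.
Variable R : realType.
Implicit Types (s A B : 'M[R]_3) (x : R).

Definition symm3 A : Prop := A^T = A.
Definition frob A B : R := \sum_(i < 3) \sum_(j < 3) A i j * B i j.
Definition fnorm A : R := Num.sqrt (frob A A).
Definition Id3 : 'M[R]_3 := 1%:M.
Definition pmean s : R := 3^-1 * frob Id3 s.
Definition dev s : 'M[R]_3 := s - pmean s *: Id3.
Definition rho s : R := fnorm (dev s).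
Definition J2 s : R := 2^-1 * frob (dev s) (dev s).
Definition J3 s : R := 3^-1 * frob (dev s *m dev s *m dev s) Id3.
(* Lode angle (meaningful only when rho s > 0); J2^(3/2) = J2 * sqrt J2 *)
Definition theta s : R :=
  3^-1 * acos ((3 * Num.sqrt 3 / 2) * J3 s / (J2 s * Num.sqrt (J2 s))).
Definition r_e (e c : R) : R :=
  (4 * (1 - e ^+ 2) * c ^+ 2 + (2 * e - 1) ^+ 2) /
  (2 * (1 - e ^+ 2) * c +
   (2 * e - 1) * Num.sqrt (4 * (1 - e ^+ 2) * c ^+ 2 + 5 * e ^+ 2 - 4 * e)).
Definition rho_e (e : R) s : R :=
  if 0 < rho s then rho s * r_e e (cos (theta s)) else 0.
(* r_e^tr; set to 0 when rho^tr = 0 (products with a vanishing factor are 0) *)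
Definition r_e_tr (e : R) s : R :=
  if 0 < rho s then r_e e (cos (theta s)) else 0.
Definition subdiff_rho s : set 'M[R]_3 :=
  if 0 < rho s then [set (rho s)^-1 *: dev s]
  else [set n | symm3 n /\ frob Id3 n = 0 /\ fnorm n <= 1].

Definition pos_part x : R := Num.max 0 x.

Definition mgp (Ag Bg fc ft p : R) : R := Ag * expR ((p - ft / 3) / (Bg * fc)).
Definition fhat (m0 fc p r re : R) : R :=
  3 / 2 * (r / fc) ^+ 2 + m0 * (re / (Num.sqrt 6 * fc) + p / fc) - 1.

Definition phat_tr (K Ag Bg fc ft ptr gam : R) : R :=
  xget 0 [set p | p + gam * K * mgp Ag Bg fc ft p / fc = ptr].
Definition rhohat_tr (G m0 fc rtr gam : R) : R :=
  xget 0 [set r | r = pos_part (rtr - gam * (2 * G) *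
                     (3 * r / fc ^+ 2 + m0 / (Num.sqrt 6 * fc)))].
Definition q_tr (K G m0 Ag Bg fc ft e : R) (str : 'M[R]_3) (gam : R) : R :=
  let rh := rhohat_tr G m0 fc (rho str) gam in
  let ph := phat_tr K Ag Bg fc ft (pmean str) gam in
  3 / 2 * (rh / fc) ^+ 2
  + m0 * (rh * r_e_tr e str / (Num.sqrt 6 * fc) + ph / fc) - 1.

Definition prob_R (K G m0 Ag Bg fc ft e : R) (str : 'M[R]_3) (p r dl : R) : Prop :=
  [/\ 0 <= dl,
      p = pmean str - dl * K * mgp Ag Bg fc ft p / fc,
      r = pos_part (rho str - dl * (2 * G) *
                    (3 * r / fc ^+ 2 + m0 / (Num.sqrt 6 * fc)))
    & fhat m0 fc p r (r * r_e_tr e str) = 0].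

Definition prob_P (K G m0 Ag Bg fc ft e : R) (str s : 'M[R]_3) (dl : R) : Prop :=
  [/\ symm3 s,
      exists2 n, n \in subdiff_rho s &
        s = str - dl *: (K * mgp Ag Bg fc ft (pmean s) / fc *: Id3
              + (2 * G * (3 * rho s / fc ^+ 2 + m0 / (Num.sqrt 6 * fc))) *: n),
      0 <= dl,
      fhat m0 fc (pmean s) (rho s) (rho_e e s) <= 0
    & dl * fhat m0 fc (pmean s) (rho s) (rho_e e s) = 0].
End Defs.

(* For a fixed multiplier g, the first two equations of (R) are solved by p = phat_tr g and
   rho = rhohat_tr g = (rho^tr - g a)^+ / (1 + g b), so (R) amounts to q_tr g = 0.  Both
   solutions decrease with g (phat_tr strictly) while fhat increases in p and rho, hence q_tr
   is strictly decreasing.  It is positive at 0 because the trial state is inadmissible; a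
   negative value, and then a root by the intermediate value theorem, is obtained by
   parametrising g by p through g = (p^tr - p) fc / (K m_g'(p)), which is continuous in p.
   Problem (P) reduces to (R): splitting the return equation into mean stress and deviator, a
   step along a subgradient of rho only shrinks the deviator radially, so the Lode angle and
   hence r_e are those of the trial stress.  The threshold D is where (rho^tr - g a)^+ vanishes. *)

From mathcomp Require Import all_boot all_order all_algebra.
From mathcomp Require Import all_classical all_reals all_analysis.
From mathcomp Require Import ring lra.
Import Order.TTheory GRing.Theory Num.Theory.
Import numFieldNormedType.Exports.
Set Implicit Arguments. Unset Strict Implicit. Unset Printing Implicit Defensive.
Local Open Scope ring_scope.

Section Frobenius.
Variable R : realType.
Implicit Types (A B C s t n : 'M[R]_3) (c k : R).

Lemma frobC A B : frob A B = frob B A.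
Proof. by apply: eq_bigr => i _; apply: eq_bigr => j _; rewrite mulrC. Qed.

Lemma frobDr A B C : frob A (B + C) = frob A B + frob A C.
Proof.
rewrite /frob -big_split; apply: eq_bigr => i _; rewrite -big_split.
by apply: eq_bigr => j _; rewrite mxE mulrDr.
Qed.

Lemma frobZr c A B : frob A (c *: B) = c * frob A B.
Proof.
rewrite /frob mulr_sumr; apply: eq_bigr => i _; rewrite mulr_sumr.
by apply: eq_bigr => j _; rewrite mxE mulrCA.
Qed.

Lemma frobZl c A B : frob (c *: A) B = c * frob A B.
Proof. by rewrite frobC frobZr frobC. Qed.

Lemma frobNr A B : frob A (- B) = - frob A B.
Proof. by rewrite -scaleN1r frobZr mulN1r. Qed.

Lemma frob_ge0 A : 0 <= frob A A.
Proof. by do 2!apply: sumr_ge0 => ? _; rewrite -expr2 sqr_ge0. Qed.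

Lemma frob_eq0 A : frob A A = 0 -> A = 0.
Proof.
move=> A0; apply/matrixP => i j; rewrite mxE.
have sq_ge0 (i' j' : 'I_3) : 0 <= A i' j' * A i' j' by rewrite -expr2 sqr_ge0.
have rows0 := psumr_eq0P (fun i' _ => sumr_ge0 _ (fun j' _ => sq_ge0 i' j')) A0.
have /eqP := @psumr_eq0P _ _ _ _ (fun j' _ => sq_ge0 i j') (@rows0 i isT) j isT.
by rewrite mulf_eq0 orbb => /eqP.
Qed.

Lemma fnorm_ge0 A : 0 <= fnorm A.
Proof. exact: sqrtr_ge0. Qed.

Lemma fnorm_eq0 A : fnorm A = 0 -> A = 0.
Proof.
move/eqP; rewrite sqrtr_eq0 => A0; apply: frob_eq0.
by apply/eqP; rewrite eq_le A0 frob_ge0.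
Qed.

Lemma fnormZ c A : fnorm (c *: A) = `|c| * fnorm A.
Proof. by rewrite /fnorm frobZl frobZr mulrA sqrtrM ?sqr_ge0 // sqrtr_sqr. Qed.

Lemma frobII : frob (Id3 R) (Id3 R) = 3.
Proof. by rewrite /frob !big_ord_recr !big_ord0 /= !mxE /=; ring. Qed.

Lemma pmeanI : pmean (Id3 R) = 1.
Proof. by rewrite /pmean frobII mulVf. Qed.

Lemma pmeanD A B : pmean (A + B) = pmean A + pmean B.
Proof. by rewrite /pmean frobDr mulrDr. Qed.

Lemma pmeanZ c A : pmean (c *: A) = c * pmean A.
Proof. by rewrite /pmean frobZr mulrCA. Qed.

Lemma pmeanN A : pmean (- A) = - pmean A.
Proof. by rewrite /pmean frobNr mulrN. Qed.

Lemma pmean_traceless n : frob (Id3 R) n = 0 -> pmean n = 0.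
Proof. by rewrite /pmean => ->; rewrite mulr0. Qed.

Lemma dev_traceless n : frob (Id3 R) n = 0 -> dev n = n.
Proof. by move=> /pmean_traceless n0; rewrite /dev n0 scale0r subr0. Qed.

Lemma pmean_dev A : pmean (dev A) = 0.
Proof. by rewrite /dev pmeanD pmeanN pmeanZ pmeanI mulr1 subrr. Qed.

Lemma frobI_dev A : frob (Id3 R) (dev A) = 0.
Proof.
by have /eqP := pmean_dev A; rewrite mulf_eq0 invr_eq0 pnatr_eq0 => /eqP.
Qed.

Lemma devD A B : dev (A + B) = dev A + dev B.
Proof. by rewrite /dev pmeanD scalerDl opprD addrACA. Qed.

Lemma devZ c A : dev (c *: A) = c *: dev A.
Proof. by rewrite /dev pmeanZ scalerBr scalerA. Qed.

Lemma devN A : dev (- A) = - dev A.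
Proof. by rewrite -scaleN1r devZ scaleN1r. Qed.

Lemma devI : dev (Id3 R) = 0.
Proof. by rewrite /dev pmeanI scale1r subrr. Qed.

Lemma dev_dev A : dev (dev A) = dev A.
Proof. exact/dev_traceless/frobI_dev. Qed.

Lemma pmean_dev_decomp A : A = pmean A *: Id3 R + dev A.
Proof. by rewrite /dev addrC subrK. Qed.

Lemma pmean_dev_inj A B : pmean A = pmean B -> dev A = dev B -> A = B.
Proof. by move=> pAB dAB; rewrite [LHS]pmean_dev_decomp pAB dAB -pmean_dev_decomp. Qed.

Lemma pmean_dev_return t n a b l : frob (Id3 R) n = 0 ->
  pmean (t - l *: (a *: Id3 R + b *: n)) = pmean t - l * a /\
  dev (t - l *: (a *: Id3 R + b *: n)) = dev t - (l * b) *: n.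
Proof.
move=> n0; rewrite pmeanD pmeanN devD devN !(pmeanZ, devZ) pmeanD devD.
rewrite !(pmeanZ, devZ) pmeanI (pmean_traceless n0) (dev_traceless n0) devI.
by rewrite mulr0 addr0 mulr1 scaler0 add0r scalerA.
Qed.

Lemma symm3_dev t : symm3 t -> symm3 (dev t).
Proof. by rewrite /symm3 /dev => tT; rewrite linearB linearZ /= tT trmx1. Qed.

Lemma symm3Z c t : symm3 t -> symm3 (c *: t).
Proof. by rewrite /symm3 => tT; rewrite linearZ /= tT. Qed.

Lemma symm3_pmean_dev c k t : symm3 t -> symm3 (c *: Id3 R + k *: dev t).
Proof.
by move=> /symm3_dev/(symm3Z k); rewrite /symm3 => tT; rewrite linearD linearZ /= trmx1 tT.
Qed.
End Frobenius.

Section LodeAngle.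
Variable R : realType.
Implicit Types (s t : 'M[R]_3) (e k : R).

Lemma theta_devZ s t k : 0 < k -> dev s = k *: dev t -> theta s = theta t.
Proof.
move=> k0 st.
have J2E : J2 s = k ^+ 2 * J2 t by rewrite /J2 st frobZl frobZr; ring.
have J3E : J3 s = k ^+ 3 * J3 t.
  rewrite /J3 st; do ![rewrite -scalemxAl|rewrite -scalemxAr]; rewrite !scalerA frobZl; ring.
rewrite /theta J2E J3E sqrtrM ?sqr_ge0 // sqrtr_sqr gtr0_norm //.
move: (J2 t) (J3 t) => j2 j3; congr (_ * acos _); rewrite !invfM.
move: j2^-1 (Num.sqrt j2)^-1 => u v.
by field; rewrite gt_eqF.
Qed.

Lemma rho_e_devZ e s t k : 0 <= k -> dev s = k *: dev t ->
  rho_e e s = rho s * r_e_tr e t.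
Proof.
move=> k0 st; have rhoE : rho s = k * rho t by rewrite /rho st fnormZ ger0_norm.
rewrite /rho_e /r_e_tr; case: ltP => [rs_gt0 | rs_le0]; last first.
  have -> : rho s = 0 by apply/le_anti; rewrite rs_le0 fnorm_ge0.
  by rewrite mul0r.
have rt_gt0 : 0 < rho t.
  rewrite lt_neqAle fnorm_ge0 andbT; apply: contraTneq rs_gt0 => rt0.
  by rewrite rhoE -rt0 mulr0 ltxx.
have k_gt0 : 0 < k by rewrite -(pmulr_lgt0 _ rt_gt0) -rhoE.
by rewrite rt_gt0 (theta_devZ k_gt0 st).
Qed.

(* [acos] is total: outside [-1, 1] it returns a default value, which still lies in [0, pi]. *)
Lemma acos_range (x : R) : 0 <= acos x <= pi.
Proof.
rewrite unlock; case: xgetP => [y -> [] //|_].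
by rewrite /point /= lexx pi_ge0.
Qed.

Lemma r_e_ge0 e c : 2^-1 <= e <= 1 -> 0 <= c -> 0 <= r_e e c.
Proof.
move=> /andP[e_ge e_le1] c0.
have e2_le1 : 0 <= 1 - e ^+ 2 by rewrite subr_ge0 expr_le1 // (le_trans _ e_ge).
have e_gehalf : 0 <= 2 * e - 1 by lra.
by rewrite divr_ge0 ?addr_ge0 ?mulr_ge0 ?sqr_ge0 ?sqrtr_ge0.
Qed.

Lemma r_e_tr_ge0 e s : 2^-1 <= e <= 1 -> 0 <= r_e_tr e s.
Proof.
move=> he; rewrite /r_e_tr; case: ifP => // _; apply: (r_e_ge0 he).
apply: cos_ge0_pihalf; have := acos_range (3 * Num.sqrt 3 / 2 * J3 s / (J2 s * Num.sqrt (J2 s))).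
have := @pi_ge0 R; rewrite /theta; set a := acos _ => pi0 /andP[a0 a_lepi].
by apply/andP; split; lra.
Qed.
End LodeAngle.

Section PositivePart.
Variable R : realType.
Implicit Types (x y t c r : R).

Lemma pos_part0 x : x <= 0 -> pos_part x = 0.
Proof. by move=> x_le0; rewrite /pos_part max_l. Qed.

Lemma pos_partE x : 0 <= x -> pos_part x = x.
Proof. by move=> x_ge0; rewrite /pos_part max_r. Qed.

Lemma pos_part_ge0 x : 0 <= pos_part x.
Proof. by rewrite /pos_part le_max lexx. Qed.

Lemma pos_part_le x y : x <= y -> pos_part x <= pos_part y.
Proof.
move=> xy; case: (leP x 0) => [x_le0 | x_gt0]; first by rewrite pos_part0 ?pos_part_ge0.
by rewrite !pos_partE ?(ltW x_gt0) // (le_trans (ltW x_gt0)).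
Qed.

Lemma pos_part_fixE t c r : 0 <= c ->
  r = pos_part (t - c * r) <-> r = pos_part t / (1 + c).
Proof.
move=> c0; have c1_neq0 : 1 + c != 0 by rewrite gt_eqF // ltr_wpDr.
split=> [rE | ->].
- case: (leP (t - c * r) 0) => [tcr_le0 | tcr_gt0].
    have r0 : r = 0 by rewrite rE pos_part0.
    by move: tcr_le0; rewrite r0 mulr0 subr0 => t_le0; rewrite pos_part0 ?mul0r.
  have rlin : r = t - c * r by rewrite {1}rE pos_partE ?(ltW tcr_gt0).
  have tE : t = r * (1 + c) by rewrite mulrDr mulr1 {1}rlin; ring.
  have r_ge0 : 0 <= r by rewrite rE pos_part_ge0.
  by rewrite tE pos_partE ?mulfK // mulr_ge0 // addr_ge0.
- case: (leP t 0) => [t_le0 | t_gt0].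
    by rewrite pos_part0 // mul0r mulr0 subr0 pos_part0.
  rewrite pos_partE ?(ltW t_gt0) //.
  have -> : t - c * (t / (1 + c)) = t / (1 + c) by field.
  by rewrite pos_partE // divr_ge0 ?(ltW t_gt0) // addr_ge0.
Qed.

Section Shrink.
Variables (t a b : R).
Hypotheses (a_ge0 : 0 <= a) (b_ge0 : 0 <= b).

(* Explicit solution of the fixed-point equation [r = (t - g (b r + a))^+] behind [rhohat_tr]. *)
Definition shrink g := pos_part (t - g * a) / (1 + g * b).

Lemma shrink_fixE g r : 0 <= g ->
  r = pos_part (t - g * (b * r + a)) <-> r = shrink g.
Proof.
move=> g0; rewrite (_ : t - g * (b * r + a) = t - g * a - g * b * r); last by ring.
exact/pos_part_fixE/mulr_ge0.
Qed.

Lemma shrink_ge0 g : 0 <= g -> 0 <= shrink g.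
Proof. by move=> g0; rewrite divr_ge0 ?pos_part_ge0 ?addr_ge0 ?mulr_ge0. Qed.

Lemma shrink0 : 0 <= t -> shrink 0 = t.
Proof. by move=> t0; rewrite /shrink !mul0r subr0 addr0 divr1 pos_partE. Qed.

Lemma shrink_le g1 g2 : 0 <= g1 -> g1 <= g2 -> shrink g2 <= shrink g1.
Proof.
move=> g1_ge0 g12; have g2_ge0 := le_trans g1_ge0 g12.
have d1_gt0 : 0 < 1 + g1 * b by rewrite ltr_wpDr ?mulr_ge0.
apply: (le_trans (y := pos_part (t - g1 * a) / (1 + g2 * b))).
  by rewrite ler_wpM2r ?invr_ge0 ?addr_ge0 ?mulr_ge0 // pos_part_le // lerB // ler_wpM2r.
by rewrite ler_wpM2l ?pos_part_ge0 // lef_pV2 ?posrE ?(lt_le_trans d1_gt0) // lerD2l ler_wpM2r.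
Qed.

Lemma shrink_gt0 g : 0 < a -> 0 <= g -> (0 < shrink g) = (g < t / a).
Proof.
move=> a_gt0 g0; rewrite /shrink pmulr_lgt0 ?invr_gt0 ?ltr_wpDr ?mulr_ge0 //.
by rewrite /pos_part lt_max ltxx /= subr_gt0 ltr_pdivlMr.
Qed.

Lemma continuous_shrink g : 0 <= g -> {for g, continuous shrink}.
Proof.
move=> g0; apply: cvgM; last first.
  apply: cvgV; first by rewrite gt_eqF // ltr_wpDr ?mulr_ge0.
  by apply: cvgD; [exact: cvg_cst | apply: cvgMr_tmp; exact: cvg_id].
apply: (@continuous_max _ _ (fun=> 0) (fun x => t - x * a)); first exact: cvg_cst.
by apply: cvgB; [exact: cvg_cst | apply: cvgMr_tmp; exact: cvg_id].
Qed.
End Shrink.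
End PositivePart.

Section Subdifferential.
Variable R : realType.
Implicit Types (s t n : 'M[R]_3) (c r : R).

Lemma subdiff_rho_traceless s n : n \in subdiff_rho s -> frob (Id3 R) n = 0.
Proof.
rewrite in_setE /subdiff_rho; case: ifP => _ => [-> | [_ []] //].
by rewrite frobZr frobI_dev mulr0.
Qed.

Lemma rho_dev_rescale s t r : 0 <= r <= rho t -> dev s = (r / rho t) *: dev t -> rho s = r.
Proof.
move=> /andP[r0 rt] st; rewrite /rho st fnormZ ger0_norm ?divr_ge0 ?fnorm_ge0 //.
have [rt0 | rt_neq0] := eqVneq (rho t) 0; last by rewrite divfK.
have -> : r = 0 by apply/le_anti; rewrite r0 andbT -rt0.
by rewrite !mul0r.
Qed.

Lemma subdiff_rho_shrink s t n c : 0 <= c -> n \in subdiff_rho s ->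
  dev s = dev t - c *: n -> rho s = pos_part (rho t - c) /\ dev s = (rho s / rho t) *: dev t.
Proof.
move=> c0; rewrite in_setE /subdiff_rho.
case: ifP => [rs_gt0 -> | rs_le0 [_ [_ n_le1]]] ds.
  have rs_neq0 : rho s != 0 by rewrite gt_eqF.
  have dtE : dev t = (1 + c / rho s) *: dev s.
    by rewrite scalerDl scale1r -scalerA {1}ds subrK.
  have rtE : rho t = rho s + c.
    rewrite /rho dtE fnormZ ger0_norm -/(rho s) ?addr_ge0 ?divr_ge0 ?fnorm_ge0 //.
    by field.
  split; first by rewrite rtE addrK pos_partE // ltW.
  rewrite dtE scalerA rtE (_ : rho s / (rho s + c) * (1 + c / rho s) = 1) ?scale1r //.
  by field; rewrite rs_neq0 gt_eqF // ltr_wpDr.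
have rs0 : rho s = 0 by apply/le_anti; rewrite fnorm_ge0 andbT leNgt rs_le0.
have ds0 : dev s = 0 by apply: fnorm_eq0.
have dtE : dev t = c *: n by apply/eqP; rewrite -subr_eq0 -ds0 ds.
have rt_le : rho t <= c.
  by rewrite /rho dtE fnormZ ger0_norm // -[X in _ <= X]mulr1 ler_wpM2l.
by rewrite ds0 rs0 pos_part0 ?subr_le0 // mul0r scale0r.
Qed.

Lemma subdiff_rho0_scale s t c : rho s = 0 -> symm3 t -> rho t <= c ->
  exists2 n, n \in subdiff_rho s & dev t = c *: n.
Proof.
move=> rs0 tT rt_le; have c0 : 0 <= c := le_trans (fnorm_ge0 _) rt_le.
exists (c^-1 *: dev t).
  rewrite in_setE /subdiff_rho rs0 ltxx; split; first exact/symm3Z/symm3_dev.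
  split; first by rewrite frobZr frobI_dev mulr0.
  rewrite fnormZ ger0_norm ?invr_ge0 // -/(rho t).
  have [-> | c_neq0] := eqVneq c 0; first by rewrite invr0 mul0r.
  by rewrite mulrC ler_pdivrMr ?mul1r // lt_neqAle eq_sym c_neq0.
rewrite scalerA; have [c_eq0 | c_neq0] := eqVneq c 0; last by rewrite divff // scale1r.
rewrite c_eq0 mul0r scale0r; apply/fnorm_eq0/le_anti.
by rewrite fnorm_ge0 andbT -c_eq0.
Qed.

Lemma shrink_subdiff_rho s t c : symm3 t -> 0 <= c ->
  dev s = (pos_part (rho t - c) / rho t) *: dev t ->
  exists2 n, n \in subdiff_rho s & dev s = dev t - c *: n.
Proof.
move=> tT c0 ds; have rt0 : 0 <= rho t := fnorm_ge0 _.
have rsE : rho s = pos_part (rho t - c).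
  apply: rho_dev_rescale ds; rewrite pos_part_ge0 -[X in _ <= X](pos_partE rt0).
  by rewrite pos_part_le // gerBl.
case: (leP (rho t - c) 0) => [rtc_le0 | rtc_gt0].
  have rs0 : rho s = 0 by rewrite rsE pos_part0.
  have rt_le : rho t <= c by rewrite -subr_le0.
  have [n n_in dtE] := subdiff_rho0_scale rs0 tT rt_le.
  by exists n => //; rewrite ds pos_part0 // mul0r scale0r dtE subrr.
have rt_gt0 : 0 < rho t by rewrite (lt_le_trans rtc_gt0) // gerBl.
exists ((rho t)^-1 *: dev t).
  rewrite in_setE /subdiff_rho rsE pos_partE ?(ltW rtc_gt0) // rtc_gt0 /= ds scalerA.
  rewrite pos_partE ?(ltW rtc_gt0) //.
  by congr (_ *: _); field; rewrite !gt_eqF.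
rewrite ds scalerA -[X in _ = X - _]scale1r -scalerBl pos_partE ?(ltW rtc_gt0) //.
by congr (_ *: _); field; rewrite gt_eqF.
Qed.
End Subdifferential.

Section ModelFunctions.
Variable R : realType.
Variables (K Ag Bg fc ft ptr : R).
Hypotheses (K_gt0 : 0 < K) (Ag_gt0 : 0 < Ag) (Bg_gt0 : 0 < Bg) (fc_gt0 : 0 < fc).
Local Notation m := (mgp Ag Bg fc ft).
Local Notation ph := (phat_tr K Ag Bg fc ft ptr).
Implicit Types (g p : R).

Lemma mgp_gt0 p : 0 < m p.
Proof. by rewrite mulr_gt0 ?expR_gt0. Qed.

Lemma mgp_le p1 p2 : p1 <= p2 -> m p1 <= m p2.
Proof.
move=> p12; rewrite ler_pM2l // ler_expR ler_pM2r ?invr_gt0 ?mulr_gt0 //.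
by rewrite lerD2r.
Qed.

Lemma continuous_mgp : continuous m.
Proof.
move=> p; apply: cvgMl_tmp; apply: continuous_comp; last exact: continuous_expR.
by apply: cvgMr_tmp; apply: cvgB; [exact: cvg_id | exact: cvg_cst].
Qed.

Lemma plastic_term_le g p1 p2 : 0 <= g -> p1 <= p2 -> g * K * m p1 / fc <= g * K * m p2 / fc.
Proof.
move=> g0 p12; rewrite ler_wpM2r ?invr_ge0 ?(ltW fc_gt0) // ler_wpM2l ?mulr_ge0 ?(ltW K_gt0) //.
exact: mgp_le.
Qed.

Lemma plastic_term_lt g1 g2 p : g1 < g2 -> g1 * K * m p / fc < g2 * K * m p / fc.
Proof. by move=> g12; rewrite !ltr_pM2r ?invr_gt0 ?mgp_gt0. Qed.

Lemma phat_tr_unique g p : 0 <= g -> p + g * K * m p / fc = ptr -> ph g = p.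
Proof.
move=> g0 pE; apply: xget_unique => // p' /= p'E.
case: (ltgtP p' p) => // [p'p | pp'].
- by have := plastic_term_le g0 (ltW p'p); lra.
- by have := plastic_term_le g0 (ltW pp'); lra.
Qed.

Lemma phat_tr_exists g : 0 <= g -> exists p, p + g * K * m p / fc = ptr.
Proof.
move=> g0; pose f p := p + g * K * m p / fc.
have T_ge0 p : 0 <= g * K * m p / fc.
  by rewrite divr_ge0 ?(ltW fc_gt0) // mulr_ge0 ?(ltW (mgp_gt0 p)) // mulr_ge0 // ltW.
pose a := ptr - g * K * m ptr / fc.
have a_le : a <= ptr by rewrite /a gerBl.
have fa : f a <= ptr by have := plastic_term_le g0 a_le; rewrite /f /a; lra.
have fptr : ptr <= f ptr by rewrite /f lerDl.
have [||p _ fp] := @IVT R f a ptr ptr a_le; last by exists p.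
- apply: continuous_subspaceT => x; apply: cvgD; first exact: cvg_id.
  by apply: cvgMr_tmp; apply: cvgMl_tmp; exact: continuous_mgp.
- by rewrite ge_min le_max fa fptr orbT.
Qed.

Lemma phat_trP g : 0 <= g -> ph g + g * K * m (ph g) / fc = ptr.
Proof. by move=> g0; have [p pE] := phat_tr_exists g0; rewrite (phat_tr_unique g0 pE). Qed.

Lemma phat_tr0 : ph 0 = ptr.
Proof. by apply: phat_tr_unique => //; rewrite !mul0r addr0. Qed.

Lemma phat_tr_decr g1 g2 : 0 <= g1 -> g1 < g2 -> ph g2 < ph g1.
Proof.
move=> g1_ge0 g12; have g2_ge0 := le_trans g1_ge0 (ltW g12).
have := phat_trP g1_ge0; have := phat_trP g2_ge0.
rewrite ltNge => ph2E ph1E; apply/negP => ph12.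
have := plastic_term_le g2_ge0 ph12; have := plastic_term_lt (ph g1) g12; lra.
Qed.
End ModelFunctions.

Section YieldFunction.
Variable R : realType.
Variables (m0 fc re : R).
Hypotheses (m0_gt0 : 0 < m0) (fc_gt0 : 0 < fc) (re_ge0 : 0 <= re).

Lemma fhat_le p1 p2 r1 r2 : 0 <= r1 -> r1 <= r2 -> p1 <= p2 ->
  fhat m0 fc p1 r1 (r1 * re) <= fhat m0 fc p2 r2 (r2 * re).
Proof.
move=> r1_ge0 r12 p12.
have fc_inv_ge0 : 0 <= fc^-1 by rewrite invr_ge0 ltW.
have s6fc_inv_ge0 : 0 <= (Num.sqrt 6 * fc)^-1 by rewrite invr_ge0 ltW // mulr_gt0 ?sqrtr_gt0.
rewrite lerD2r lerD ?ler_wpM2l ?(ltW m0_gt0) //.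
  by rewrite ler_pXn2r ?nnegrE ?divr_ge0 ?(ltW fc_gt0) ?ler_wpM2r // (le_trans r1_ge0).
by rewrite lerD // ler_wpM2r // ler_wpM2r.
Qed.

Lemma fhat_lt p1 p2 r1 r2 : 0 <= r1 -> r1 <= r2 -> p1 < p2 ->
  fhat m0 fc p1 r1 (r1 * re) < fhat m0 fc p2 r2 (r2 * re).
Proof.
move=> r1_ge0 r12 p12; apply: le_lt_trans (fhat_le r1_ge0 r12 (lexx p1)) _.
by rewrite ltrD2r ltrD2l ltr_pM2l // ltrD2l ltr_pM2r ?invr_gt0.
Qed.

Lemma continuous_fhat (f g : R -> R) x : {for x, continuous f} -> {for x, continuous g} ->
  {for x, continuous (fun y => fhat m0 fc (f y) (g y) (g y * re))}.
Proof.
move=> cf cg; apply: cvgB; last exact: cvg_cst.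
apply: cvgD; first by apply: cvgMl_tmp; rewrite expr2; apply: cvgM; apply: cvgMr_tmp.
apply: cvgMl_tmp; apply: cvgD; last exact: cvgMr_tmp.
by do 2!apply: cvgMr_tmp.
Qed.
End YieldFunction.

Section ReturnMapping.
Variable R : realType.
Variables (K G m0 Ag Bg fc ft e : R) (str : 'M[R]_3).
Hypotheses (K_gt0 : 0 < K) (G_gt0 : 0 < G) (m0_gt0 : 0 < m0) (Ag_gt0 : 0 < Ag)
  (Bg_gt0 : 0 < Bg) (fc_gt0 : 0 < fc) (e_range : 2^-1 <= e <= 1).
Hypothesis trial_inadmissible : 0 < fhat m0 fc (pmean str) (rho str) (rho_e e str).
Implicit Types (g l p r : R) (s : 'M[R]_3).

Local Notation ptr := (pmean str).
Local Notation rtr := (rho str).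
Local Notation re := (r_e_tr e str).
Local Notation m := (mgp Ag Bg fc ft).
Local Notation a_rho := (2 * G * (m0 / (Num.sqrt 6 * fc))).
Local Notation b_rho := (2 * G * (3 / fc ^+ 2)).
Local Notation rh := (shrink rtr a_rho b_rho).
Local Notation ph := (phat_tr K Ag Bg fc ft ptr).
Local Notation q := (q_tr K G m0 Ag Bg fc ft e str).

Lemma a_rho_gt0 : 0 < a_rho.
Proof. by rewrite !mulr_gt0 ?invr_gt0 ?mulr_gt0 ?sqrtr_gt0. Qed.

Lemma b_rho_ge0 : 0 <= b_rho.
Proof. by rewrite !mulr_ge0 ?invr_ge0 ?sqr_ge0 // ltW. Qed.

Lemma rhohat_fixE g r : 0 <= g ->
  r = pos_part (rtr - g * (2 * G) * (3 * r / fc ^+ 2 + m0 / (Num.sqrt 6 * fc)))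
  <-> r = rh g.
Proof.
move=> g0; rewrite -(shrink_fixE rtr a_rho b_rho_ge0 r g0).
by rewrite (_ : _ * (_ + _) = g * (b_rho * r + a_rho)) //; ring.
Qed.

Lemma rhohat_trE g : 0 <= g -> rhohat_tr G m0 fc rtr g = rh g.
Proof.
move=> g0; apply: xget_unique => [|r /=]; first by apply/(rhohat_fixE _ g0).
by move/(rhohat_fixE _ g0).
Qed.

Lemma rh_ge0 g : 0 <= g -> 0 <= rh g.
Proof. exact: (shrink_ge0 _ _ b_rho_ge0). Qed.

Lemma rh_le g1 g2 : 0 <= g1 -> g1 <= g2 -> rh g2 <= rh g1.
Proof. exact: (shrink_le _ (ltW a_rho_gt0) b_rho_ge0). Qed.

Lemma rh_le_rtr g : 0 <= g -> rh g <= rtr.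
Proof. by move=> g0; rewrite -[X in _ <= X](shrink0 a_rho b_rho (fnorm_ge0 _)) rh_le. Qed.

Lemma rh_gt0 g : 0 <= g ->
  (0 < rh g) = (g < Num.sqrt 6 * fc * rtr / (2 * G * m0)).
Proof.
move=> g0; rewrite (shrink_gt0 _ b_rho_ge0 a_rho_gt0 g0); congr (_ < _).
by field; rewrite !gt_eqF ?sqrtr_gt0.
Qed.

Lemma q_trE g : 0 <= g -> q g = fhat m0 fc (ph g) (rh g) (rh g * re).
Proof. by move=> g0; rewrite /q_tr rhohat_trE. Qed.

Lemma q_tr0_gt0 : 0 < q 0.
Proof.
rewrite q_trE // phat_tr0 // (shrink0 a_rho b_rho (fnorm_ge0 _)).
by rewrite -(rho_e_devZ e (k := 1)) ?scale1r.
Qed.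

Lemma q_tr_decr : {in Num.nneg &, {homo q : g1 g2 /~ g1 < g2}}.
Proof.
move=> g1 g2; rewrite !nnegrE => g1_ge0 g2_ge0 g12.
rewrite !q_trE //; apply: fhat_lt; rewrite ?r_e_tr_ge0 ?rh_ge0 ?rh_le ?(ltW g12) //.
by apply: phat_tr_decr.
Qed.

Lemma q_tr_leE : {in Num.nneg &, {mono q : g1 g2 /~ g1 <= g2}}.
Proof. exact/le_nmono_in/q_tr_decr. Qed.

Lemma q_tr_ltE : {in Num.nneg &, {mono q : g1 g2 /~ g1 < g2}}.
Proof. exact/leW_nmono_in/q_tr_leE. Qed.

Lemma q_tr_root_gt0 g : 0 <= g -> q g <= 0 -> 0 < g.
Proof.
rewrite le_eqVlt => /predU1P[<- | //].
by rewrite leNgt q_tr0_gt0.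
Qed.

Lemma q_tr_root_unique g1 g2 : 0 <= g1 -> 0 <= g2 -> q g1 = 0 -> q g2 = 0 -> g1 = g2.
Proof.
move=> g1_ge0 g2_ge0 q1 q2.
by apply/le_anti/andP; split; rewrite -q_tr_leE ?nnegrE // q1 q2.
Qed.

(* The inverse of [ph] on ]-oo, ptr]; unlike the implicitly defined [ph], it is visibly
   continuous, which lets the intermediate value theorem run in the variable [p]. *)
Definition gam_of p := (ptr - p) * fc / (K * m p).

Lemma gam_of_ge0 p : p <= ptr -> 0 <= gam_of p.
Proof.
move=> p_le; apply: divr_ge0; first by rewrite mulr_ge0 ?subr_ge0 // ltW.
by rewrite ltW // mulr_gt0 // mgp_gt0.
Qed.

Lemma phat_gam_of p : p <= ptr -> ph (gam_of p) = p.
Proof.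
move=> p_le; apply: phat_tr_unique; rewrite ?gam_of_ge0 //.
by rewrite /gam_of; field; rewrite !gt_eqF ?mgp_gt0.
Qed.

Lemma continuous_gam_of : continuous gam_of.
Proof.
move=> p; apply: cvgM.
  by apply: cvgMr_tmp; apply: cvgB; [exact: cvg_cst | exact: cvg_id].
apply: cvgV; first by rewrite gt_eqF // mulr_gt0 // mgp_gt0.
by apply: cvgMl_tmp; exact: continuous_mgp.
Qed.

Lemma q_tr_root : exists2 dl, 0 < dl & q dl = 0.
Proof.
pose Q p := fhat m0 fc p (rh (gam_of p)) (rh (gam_of p) * re).
have QE p : p <= ptr -> Q p = q (gam_of p).
  by move=> p_le; rewrite q_trE ?gam_of_ge0 ?phat_gam_of.
(* far enough to the left, the linear term [m0 p / fc] of [fhat] dominates *)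
set F := fhat m0 fc 0 rtr (rtr * re).
pose p0 := Num.min ptr (- (F + 1) * fc / m0).
have p0_le : p0 <= ptr by rewrite ge_min lexx.
have Q_p0 : Q p0 < 0.
  have Q_le : Q p0 <= fhat m0 fc p0 rtr (rtr * re).
    by rewrite fhat_le ?r_e_tr_ge0 ?rh_ge0 ?rh_le_rtr ?gam_of_ge0.
  have p0_le' : m0 * p0 / fc <= - (F + 1).
    have -> : - (F + 1) = m0 * (- (F + 1) * fc / m0) / fc by field; rewrite !gt_eqF.
    rewrite ler_wpM2r ?invr_ge0 ?(ltW fc_gt0) // ler_wpM2l ?(ltW m0_gt0) //.
    by rewrite /p0 ge_min lexx orbT.
  have fhatE : fhat m0 fc p0 rtr (rtr * re) = F + m0 * p0 / fc by rewrite /F /fhat; ring.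
  lra.
have Q_ptr : 0 < Q ptr.
  by rewrite QE // /gam_of subrr !mul0r q_tr0_gt0.
have [||p p_in Qp] := @IVT R Q p0 ptr 0 p0_le.
- apply: continuous_in_subspaceT => x; rewrite inE /= in_itv /= => /andP[_ x_le].
  apply: (@continuous_fhat R m0 fc re id (rh \o gam_of)); first exact: cvg_id.
  apply: continuous_comp; first exact: continuous_gam_of.
  exact: (continuous_shrink b_rho_ge0 (gam_of_ge0 x_le)).
- by rewrite ge_min le_max (ltW Q_p0) (ltW Q_ptr) orbT.
have p_le : p <= ptr by move: p_in; rewrite in_itv /= => /andP[].
exists (gam_of p); last by rewrite -QE.
by apply: q_tr_root_gt0; rewrite ?gam_of_ge0 // -QE // Qp.
Qed.

Lemma prob_R_root p r l : prob_R K G m0 Ag Bg fc ft e str p r l ->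
  [/\ 0 < l, q l = 0, p = ph l & r = rh l].
Proof.
case=> l0 pE rE f0.
have php : ph l = p by apply: phat_tr_unique => //; rewrite {1}pE; ring.
have rhr : r = rh l by apply/(rhohat_fixE _ l0).
have ql : q l = 0 by rewrite q_trE // php -rhr.
by split=> //; apply: q_tr_root_gt0; rewrite ?ql.
Qed.

Lemma root_prob_R l : 0 <= l -> q l = 0 -> prob_R K G m0 Ag Bg fc ft e str (ph l) (rh l) l.
Proof.
move=> l0 ql; split=> //; last by rewrite -q_trE.
- by have := phat_trP ft ptr K_gt0 Ag_gt0 Bg_gt0 fc_gt0 l0; lra.
- exact/(rhohat_fixE _ l0).
Qed.

Lemma flow_rate_ge0 l r : 0 <= l -> 0 <= r ->
  0 <= l * (2 * G * (3 * r / fc ^+ 2 + m0 / (Num.sqrt 6 * fc))).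
Proof.
move=> l0 r0; rewrite mulr_ge0 // mulr_ge0 ?mulr_ge0 ?(ltW G_gt0) //.
by rewrite addr_ge0 ?divr_ge0 ?mulr_ge0 ?sqr_ge0 ?sqrtr_ge0 ?(ltW m0_gt0) ?(ltW fc_gt0).
Qed.

Definition return_stress l := ph l *: Id3 R + (rh l / rtr) *: dev str.

Lemma pmean_return_stress l : pmean (return_stress l) = ph l.
Proof. by rewrite pmeanD !pmeanZ pmeanI pmean_dev mulr0 mulr1 addr0. Qed.

Lemma dev_return_stress l : dev (return_stress l) = (rh l / rtr) *: dev str.
Proof. by rewrite devD !devZ devI dev_dev scaler0 add0r. Qed.

Lemma rho_return_stress l : 0 <= l -> rho (return_stress l) = rh l.
Proof.
move=> l0; apply: rho_dev_rescale (dev_return_stress l).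
by rewrite rh_ge0 ?rh_le_rtr.
Qed.

Lemma fhat_q_tr s l : 0 <= l -> pmean s = ph l -> rho s = rh l ->
  dev s = (rho s / rtr) *: dev str -> fhat m0 fc (pmean s) (rho s) (rho_e e s) = q l.
Proof.
move=> l0 ps rs ds.
by rewrite q_trE // (rho_e_devZ e _ ds) ?divr_ge0 ?fnorm_ge0 // ps rs.
Qed.

Lemma root_prob_P l : symm3 str -> 0 < l -> q l = 0 ->
  prob_P K G m0 Ag Bg fc ft e str (return_stress l) l.
Proof.
move=> str_sym l_gt0 ql; have l0 := ltW l_gt0.
set b := 2 * G * (3 * rh l / fc ^+ 2 + m0 / (Num.sqrt 6 * fc)).
have lb_ge0 : 0 <= l * b by rewrite flow_rate_ge0 ?rh_ge0.
have rhE : rh l = pos_part (rtr - l * b) by rewrite /b [l * _]mulrA; apply/(rhohat_fixE _ l0).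
have [n n_in dsE] : exists2 n, n \in subdiff_rho (return_stress l) &
    dev (return_stress l) = dev str - (l * b) *: n.
  by apply: shrink_subdiff_rho; rewrite // dev_return_stress -rhE.
have f0 : fhat m0 fc (pmean (return_stress l)) (rho (return_stress l))
    (rho_e e (return_stress l)) = 0.
  by rewrite (fhat_q_tr l0) ?pmean_return_stress ?rho_return_stress ?dev_return_stress.
split; rewrite ?f0 ?mulr0 //; first exact: symm3_pmean_dev.
exists n => //; have [pE dE] := pmean_dev_return str
  (K * m (pmean (return_stress l)) / fc) (2 * G * (3 * rho (return_stress l) / fc ^+ 2
    + m0 / (Num.sqrt 6 * fc))) l (subdiff_rho_traceless n_in).
apply: pmean_dev_inj; last by rewrite dE rho_return_stress // dsE.
rewrite pE pmean_return_stress [l * _]mulrA [l * _]mulrA.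
by have := phat_trP ft ptr K_gt0 Ag_gt0 Bg_gt0 fc_gt0 l0; lra.
Qed.

Lemma prob_P_root s l : prob_P K G m0 Ag Bg fc ft e str s l ->
  [/\ 0 < l, q l = 0 & s = return_stress l].
Proof.
case=> _ [n n_in sE] l0 f_le0 f_compl.
set b := 2 * G * (3 * rho s / fc ^+ 2 + m0 / (Num.sqrt 6 * fc)) in sE.
have [psE dsE] := pmean_dev_return str (K * m (pmean s) / fc) b l (subdiff_rho_traceless n_in).
rewrite -sE in psE dsE.
have lb_ge0 : 0 <= l * b by rewrite flow_rate_ge0 ?fnorm_ge0.
have [rsE ds] := subdiff_rho_shrink lb_ge0 n_in dsE.
have rs : rho s = rh l by apply/(rhohat_fixE _ l0); rewrite /b [l * _]mulrA in rsE.
have ps : pmean s = ph l.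
  by symmetry; apply: phat_tr_unique => //; rewrite {1}psE; ring.
have fE := fhat_q_tr l0 ps rs ds.
have l_gt0 : 0 < l by apply: q_tr_root_gt0; rewrite -?fE.
have ql : q l = 0.
  by rewrite -fE; apply/eqP; move/eqP: f_compl; rewrite mulf_eq0 gt_eqF.
split=> //; apply: pmean_dev_inj; first by rewrite pmean_return_stress.
by rewrite dev_return_stress -rs.
Qed.
End ReturnMapping.

Theorem theorem6 (R : realType) (K G m0 Ag Bg fc ft e : R) (str : 'M[R]_3) :
  0 < K -> 0 < G -> 0 < m0 -> 0 < Ag -> 0 < Bg -> 0 < fc -> 0 < ft ->
  2^-1 <= e <= 1 ->
  symm3 str ->
  0 < fhat m0 fc (pmean str) (rho str) (rho_e e str) ->
  let q := q_tr K G m0 Ag Bg fc ft e str in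
  let D := Num.sqrt 6 * fc * rho str / (2 * G * m0) in
  exists dl : R,
    [/\ 0 < dl /\ q dl = 0,
        (forall dl' : R, 0 < dl' -> q dl' = 0 -> dl' = dl),
        (exists x : R * R * R, prob_R K G m0 Ag Bg fc ft e str x.1.1 x.1.2 x.2 /\
           forall y : R * R * R,
             prob_R K G m0 Ag Bg fc ft e str y.1.1 y.1.2 y.2 -> y = x),
        (exists x : 'M[R]_3 * R, prob_P K G m0 Ag Bg fc ft e str x.1 x.2 /\
           forall y : 'M[R]_3 * R, prob_P K G m0 Ag Bg fc ft e str y.1 y.2 -> y = x)
      &
        ((q D < 0 -> (0 < dl < D) /\
           forall p r l : R, prob_R K G m0 Ag Bg fc ft e str p r l -> 0 < r) /\
          (0 <= q D -> D <= dl /\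
           forall p r l : R, prob_R K G m0 Ag Bg fc ft e str p r l -> r = 0))].
Proof.
move=> K0 G0 m00 Ag0 Bg0 fc0 _ he str_sym hf q D.
pose ph := phat_tr K Ag Bg fc ft (pmean str).
pose rh := shrink (rho str) (2 * G * (m0 / (Num.sqrt 6 * fc))) (2 * G * (3 / fc ^+ 2)).
have [dl dl_gt0 qdl] := q_tr_root ft K0 G0 m00 Ag0 Bg0 fc0 he hf.
have dl_ge0 := ltW dl_gt0.
have root_unique l : 0 < l -> q l = 0 -> l = dl.
  move=> l_gt0 ql; apply: (q_tr_root_unique (ft := ft) (str := str) K0 G0 m00 Ag0 Bg0 fc0 he);
  by rewrite ?ltW.
have R_sol p r l : prob_R K G m0 Ag Bg fc ft e str p r l -> (p, r, l) = (ph dl, rh dl, dl).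
  by case/(prob_R_root K0 G0 Ag0 Bg0 fc0 hf) => l_gt0 ql -> ->; rewrite (root_unique l).
have D_ge0 : 0 <= D by rewrite divr_ge0 ?mulr_ge0 ?sqrtr_ge0 ?fnorm_ge0 ?(ltW fc0) ?ltW.
have qD_lt : (q D < 0) = (dl < D).
  by rewrite -qdl (q_tr_ltE ft str K0 G0 m00 Ag0 Bg0 fc0 he) ?nnegrE.
have qD_ge : (0 <= q D) = (D <= dl).
  by rewrite -qdl (q_tr_leE ft str K0 G0 m00 Ag0 Bg0 fc0 he) ?nnegrE.
have rh_pos := rh_gt0 str G0 m00 fc0 dl_ge0.
exists dl; split=> //.
- exists (ph dl, rh dl, dl); split; last by move=> [[p r] l] /R_sol.
  by apply: (root_prob_R K0 G0 Ag0 Bg0 fc0 dl_ge0).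
- exists (return_stress K G m0 Ag Bg fc ft str dl, dl); split; first exact: root_prob_P.
  move=> [s l] /= /(prob_P_root K0 G0 m00 Ag0 Bg0 fc0 hf) [l_gt0 ql ->].
  by rewrite (root_unique l).
rewrite qD_lt qD_ge; split=> [dl_lt | D_le].
- by split=> [|p r l /R_sol[_ -> _]]; rewrite ?dl_gt0 ?rh_pos.
- split=> // p r l /R_sol[_ -> _].
  by apply/le_anti; rewrite rh_ge0 // andbT leNgt rh_pos -leNgt.
Qed.
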